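(* There exist absolute constants $c_*>0$, $K>0$ and $p_0$ such that for every prime $p\geqslant p_0$, the number $T(p)$ of ordered triples $(A,B,C)$ of subsets of $\mathbb{F}_p$ such that $x+y\neq z$ for all $x\in A$, $y\in B$, $z\in C$ satisfies $$|T(p)-3\cdot 4^p|\leqslant K(4-c_* )^p .$$
   Context: $\mathbb{F}_p$ is the field with $p$ elements, viewed as an additive group. The subsets $A,B,C$ may be empty. *)

From mathcomp Require Import all_boot all_order all_algebra.
From Stdlib Require Import Reals.
Set Implicit Arguments. Unset Strict Implicit. Unset Printing Implicit Defensive.
Import GRing.Theory.

Definition good_triple (p : nat) (t : {set 'F_p} * {set 'F_p} * {set 'F_p}) : bool :=
  [forall x in t.1.1, forall y in t.1.2, forall z in t.2, (GRing.add x y) != z].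

Definition T (p : nat) : nat :=
  #|[set t : {set 'F_p} * {set 'F_p} * {set 'F_p} | good_triple t]|.

From Stdlib Require Import Reals Lra.
From mathcomp Require Import all_boot all_order all_algebra zify ring.
Set Implicit Arguments. Unset Strict Implicit. Unset Printing Implicit Defensive.
Import GRing.Theory.

(* Write T(p) = E(p) + N(p), where E(p) counts the triples
   having an empty component (all of them are good) and N(p) the good triples
   whose three components are nonempty ("proper" triples).  Exactly
   E(p) = 8^p - (2^p - 1)^3 = 3*4^p - 3*2^p + 1, so |T(p) - 3*4^p| is at most
   the "deviation" N(p) + 3*2^p, and it remains to bound N(p) by O(3.99^p).
   The mirror symmetry (A,B,C) -> (C,-B,A) preserves goodness, so up to
   triples with |A|,|C| <= 1 every proper triple is, itself or through its
   mirror, "rich": A, B nonempty and |C| >= 2.  A rich triple is determined by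
   four anchors a in A, b in B, c <> c' in C together with the sequence of
   "profiles" (w-b in A, w-a in B, w in C) along an enumeration w_0..w_{p-1}
   of F_p with w_k + w_(k+1) - a - b in {c, c'}.  Consecutive profiles are
   compatible states of a fixed 8-state transfer graph, and a weight function
   certifies that this graph has at most 1000 * 3.9^n walks of length n. *)

(* The profile of a point w with respect to anchors a, b of a triple (A,B,C):
   the bits (w - b \in A, w - a \in B, w \in C). *)
Definition state := (bool * bool * bool)%type.

(* In a good triple, w \in C excludes both w - b \in A and w - a \in B. *)
Definition admissible (x : state) : bool := ~~ (x.2 && (x.1.1 || x.1.2)).

(* States that may be the profiles of two points u, v with u + v - a - b \in C:
   otherwise (u - b) + (v - a) or (v - b) + (u - a) would lie in C. *)
Definition compatible (x y : state) : bool :=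
  [&& admissible x, admissible y, ~~ (x.1.1 && y.1.2) & ~~ (y.1.1 && x.1.2)].

Definition states : seq state :=
  [:: (false,false,false); (true,false,false); (false,true,false);
      (true,true,false); (false,false,true); (true,false,true);
      (false,true,true); (true,true,true)].

Lemma mem_states x : x \in states.
Proof. by case: x => [[[] []] []]. Qed.

Definition follows (o : option state) (y : state) : bool :=
  if o is Some x then compatible x y else true.

Fixpoint walks (n : nat) (o : option state) : seq (seq state) :=
  if n is n'.+1 then
    flatten [seq map (cons y) (walks n' (Some y)) | y <- states & follows o y]
  else [:: [::]].

Lemma walksS n o : walks n.+1 o =
  flatten [seq map (cons y) (walks n (Some y)) | y <- states & follows o y].
Proof. by []. Qed.

Lemma size_walksS n o :
  size (walks n.+1 o) = \sum_(y <- states | follows o y) size (walks n (Some y)).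
Proof.
rewrite walksS size_flatten /shape sumnE -map_comp big_map big_filter.
by apply: eq_bigr => y _; rewrite /= size_map.
Qed.

Lemma mkseq_cons (T : Type) (f : nat -> T) n :
  mkseq f n.+1 = f 0 :: mkseq (fun k => f k.+1) n.
Proof. by rewrite /mkseq /= -[1]addn0 iotaDl -map_comp. Qed.

Lemma mem_walks n (f : nat -> state) o :
  (0 < n -> follows o (f 0)) -> (forall k, k.+1 < n -> compatible (f k) (f k.+1)) ->
  mkseq f n \in walks n o.
Proof.
elim: n f o => [|n IH] f o f0 fS; first by rewrite inE.
rewrite mkseq_cons walksS; apply/flattenP; exists (map (cons (f 0)) (walks n (Some (f 0)))).
  by apply/mapP; exists (f 0); rewrite // mem_filter f0 // mem_states.
rewrite mem_map; last by move=> ? ? [].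
by apply: IH => [n_gt0|k k_lt]; apply: fS.
Qed.

(* A positive weight w with 10 * (sum of w over the successors of x) <= 39 * w x:
   it certifies that the compatibility graph grows at rate at most 3.9 < 4. *)
Definition weight (o : option state) : nat :=
  match o with
  | None | Some (false, false, false) | Some (false, false, true) => 1000
  | Some (true, false, false) | Some (false, true, false) => 691
  | Some (true, true, false) => 514
  | Some _ => 1
  end.

Lemma weight_transfer o :
  10 * \sum_(y <- states | follows o y) weight (Some y) <= 39 * weight o.
Proof. by case: o => [[[[] []] []]|]; rewrite !big_cons big_nil. Qed.

Lemma walks_bound n o : 10 ^ n * size (walks n o) <= weight o * 39 ^ n.
Proof.
elim: n o => [|n IH] o; first by case: o => [[[[] []] []]|].
rewrite size_walksS expnS -mulnA big_distrr /=.
apply: (@leq_trans (10 * \sum_(y <- states | follows o y) weight (Some y) * 39 ^ n)).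
  by rewrite leq_mul2l; apply/orP; right; apply: leq_sum => y _; apply: IH.
rewrite -big_distrl mulnA expnS [X in _ <= X]mulnA [weight o * _]mulnC.
by rewrite leq_mul2r weight_transfer orbT.
Qed.

Open Scope ring_scope.

Definition triple (p : nat) := ({set 'F_p} * {set 'F_p} * {set 'F_p})%type.

Lemma good_tripleP p (t : triple p) :
  reflect (forall x y, x \in t.1.1 -> y \in t.1.2 -> x + y \notin t.2)
          (good_triple t).
Proof.
apply: (iffP idP) => [G x y xA yB | H].
  apply/negP => xyC.
  by move/forall_inP/(_ x xA)/forall_inP/(_ y yB)/forall_inP/(_ _ xyC): G; rewrite eqxx.
apply/forall_inP => x xA; apply/forall_inP => y yB; apply/forall_inP => z zC.
by apply: contraNneq (H x y xA yB) => ->.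
Qed.

Definition profile p (a b : 'F_p) (t : triple p) (w : 'F_p) : state :=
  ((w - b \in t.1.1, w - a \in t.1.2), w \in t.2).

Lemma profile_compatible p (t : triple p) a b u v :
  good_triple t -> a \in t.1.1 -> b \in t.1.2 -> u + v - a - b \in t.2 ->
  compatible (profile a b t u) (profile a b t v).
Proof.
move=> /good_tripleP G aA bB uvC.
have adm w : admissible (profile a b t w).
  rewrite /admissible /=; apply/negP => /andP [wC /orP [wbA|waB]].
  - by move: (G _ _ wbA bB); rewrite subrK wC.
  - by move: (G _ _ aA waB); rewrite addrC subrK wC.
rewrite /compatible !adm /=; apply/andP; split; apply/negP => /andP [xA yB].
- by move: (G _ _ xA yB); rewrite (_ : u - b + (v - a) = u + v - a - b) ?uvC //; ring.
- by move: (G _ _ xA yB); rewrite (_ : v - b + (u - a) = u + v - a - b) ?uvC //; ring.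
Qed.

Definition zigzag p (k : nat) : 'F_p :=
  if odd k then - (k.+1./2)%:R else (k./2)%:R.

Lemma zigzagS p k : zigzag p k + zigzag p k.+1 = if odd k then 0 else -1.
Proof.
rewrite /zigzag /=; case: (boolP (odd k)) => _ /=; first by rewrite addrC subrr.
by rewrite -[(k./2).+1]addn1 natrD opprD addrA subrr add0r.
Qed.

Lemma zigzag_onto p n : prime p -> (n < p)%N ->
  exists2 k, (k < p)%N & zigzag p k = n%:R.
Proof.
move=> p_pr n_lt_p; have [n2_lt_p | p_le_n2] := ltnP n.*2 p.
  by exists n.*2; rewrite // /zigzag odd_double half_double.
exists (p - n.+1).*2.+1; first by lia.
rewrite /zigzag /= odd_double /= half_double (_ : (p - n.+1).+1 = p - n)%N; last by lia.
by rewrite natrB ?(ltnW n_lt_p) // pchar_Fp_0 // sub0r opprK.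
Qed.

Definition tour p (a b c c' : 'F_p) (k : nat) : 'F_p :=
  (a + b + c') / 2 + zigzag p k * (c' - c).

Lemma tour_step p (a b c c' : 'F_p) k : 2 != 0 :> 'F_p ->
  tour a b c c' k + tour a b c c' k.+1 - a - b = if odd k then c' else c.
Proof.
move=> two_neq0.
have -> : tour a b c c' k + tour a b c c' k.+1 =
          a + b + c' + (zigzag p k + zigzag p k.+1) * (c' - c).
  by rewrite /tour; field.
by rewrite zigzagS; case: (odd k); ring.
Qed.

Lemma tour_onto p (a b c c' x : 'F_p) : prime p -> c' != c ->
  exists2 k, (k < p)%N & tour a b c c' k = x.
Proof.
move=> p_pr c'_neq_c; have d_neq0 : c' - c != 0 by rewrite subr_eq0.
set e := (x - (a + b + c') / 2) / (c' - c).
have e_lt_p : ((e : nat) < p)%N by rewrite -[X in (_ < X)%N](Fp_cast p_pr) ltn_ord.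
have [k k_lt_p zk] := zigzag_onto p_pr e_lt_p.
by exists k; rewrite // /tour zk natr_Zp /e divfK // addrC subrK.
Qed.

Lemma Fp_two_neq0 p : prime p -> (2 < p)%N -> 2 != 0 :> 'F_p.
Proof.
move=> p_pr p_gt2; apply/eqP => /(congr1 (fun x : 'F_p => nat_of_ord x)).
by rewrite val_Fp_nat // modn_small.
Qed.

Definition code p (q : 'F_p * 'F_p * 'F_p * 'F_p) (t : triple p) : seq state :=
  let: (a, b, c, c') := q in mkseq (fun k => profile a b t (tour a b c c' k)) p.

(* Since the tour visits every point, the code determines the triple. *)
Lemma code_inj p q (t1 t2 : triple p) : prime p -> q.2 != q.1.2 ->
  code q t1 = code q t2 -> t1 = t2.
Proof.
case: q => [[[a b] c] c'] /= p_pr c'_neq_c same_code.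
have same_profile w : profile a b t1 w = profile a b t2 w.
  have [k k_lt_p <-] := tour_onto a b w p_pr c'_neq_c.
  by move/(congr1 (nth (false, false, false) ^~ k)): same_code; rewrite !nth_mkseq.
case: t1 t2 same_profile {same_code} => [[A1 B1] C1] [[A2 B2] C2] /= same_profile.
congr (_, _, _); apply/setP => y.
- by case: (same_profile (y + b)); rewrite addrK.
- by case: (same_profile (y + a)); rewrite addrK.
- by case: (same_profile y).
Qed.

Lemma code_walk p q (t : triple p) : prime p -> (2 < p)%N -> good_triple t ->
  q.1.1.1 \in t.1.1 -> q.1.1.2 \in t.1.2 -> q.1.2 \in t.2 -> q.2 \in t.2 ->
  code q t \in walks p None.
Proof.
case: q => [[[a b] c] c'] /= p_pr p_gt2 G aA bB cC c'C.
apply: mem_walks => // k _; apply: profile_compatible => //.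
by rewrite tour_step ?Fp_two_neq0 //; case: (odd k).
Qed.

Definition pick_in p (A : {set 'F_p}) : 'F_p := odflt 0 [pick x in A].

Lemma pick_inP p (A : {set 'F_p}) : A != set0 -> pick_in A \in A.
Proof.
rewrite /pick_in; case: pickP => [x /= -> //|A0 /set0Pn [x xA]].
by move: (A0 x); rewrite xA.
Qed.

Definition anchors p (t : triple p) : 'F_p * 'F_p * 'F_p * 'F_p :=
  (pick_in t.1.1, pick_in t.1.2, pick_in t.2, pick_in (t.2 :\ pick_in t.2)).

Definition rich p : {set triple p} :=
  [set t : triple p | [&& good_triple t, t.1.1 != set0, t.1.2 != set0 & (1 < #|t.2|)%N]].

Lemma anchorsP p (t : triple p) : t \in rich p ->
  [/\ (anchors t).1.1.1 \in t.1.1, (anchors t).1.1.2 \in t.1.2,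
      (anchors t).1.2 \in t.2, (anchors t).2 \in t.2 & (anchors t).2 != (anchors t).1.2].
Proof.
rewrite inE => /and4P [_ A0 B0 C_gt1].
have C0 : t.2 != set0 by rewrite -card_gt0 (ltn_trans _ C_gt1).
have C'0 : t.2 :\ pick_in t.2 != set0.
  by rewrite -card_gt0; move: C_gt1; rewrite (cardsD1 (pick_in t.2)) pick_inP.
have /setD1P [c'_neq_c c'C] := pick_inP C'0.
by split; rewrite //= pick_inP.
Qed.

(* Encoding a rich triple by its anchors and its code is injective. *)
Lemma rich_bound p : prime p -> (2 < p)%N ->
  (#|rich p| <= p ^ 4 * size (walks p None))%N.
Proof.
move=> p_pr p_gt2; pose g (t : triple p) := (anchors t, code (anchors t) t).
have g_inj : {in rich p &, injective g}.
  move=> t1 t2 t1R _ same_g.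
  have same_anchors : anchors t1 = anchors t2 := congr1 fst same_g.
  have same_code : code (anchors t1) t1 = code (anchors t2) t2 := congr1 snd same_g.
  rewrite -same_anchors in same_code.
  by have [_ _ _ _ c_neq] := anchorsP t1R; apply: code_inj p_pr c_neq same_code.
have g_range : {subset map g (enum (rich p)) <=
                [seq (q, s) | q <- enum [set: 'F_p * 'F_p * 'F_p * 'F_p], s <- walks p None]}.
  move=> z /mapP [t]; rewrite mem_enum => tR ->.
  apply/allpairsP; exists (anchors t, code (anchors t) t); rewrite mem_enum inE.
  have [aA bB cC c'C _] := anchorsP tR.
  by split=> //; apply: code_walk => //; move: tR; rewrite inE => /and4P [].
rewrite cardE -(size_map g); apply: leq_trans (uniq_leq_size _ g_range) _.
  by rewrite map_inj_in_uniq ?enum_uniq // => t1 t2; rewrite !mem_enum; apply: g_inj.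
by rewrite size_allpairs -cardE cardsT !card_prod card_Fp // !expnS expn0 muln1 !mulnA.
Qed.

Close Scope ring_scope.

Lemma card_setT (T : finType) : #|{set T}| = 2 ^ #|T|.
Proof.
rewrite -cardsT -card_powerset -cardsT; apply: eq_card => A.
by rewrite powersetE subsetT inE.
Qed.

Definition full p : {set triple p} := setX (setX [set~ set0] [set~ set0]) [set~ set0].

Definition proper p : {set triple p} := [set t in full p | good_triple t].

Lemma good_nonfull p (t : triple p) : t \notin full p -> good_triple t.
Proof.
rewrite !inE -!negb_or => /negbNE empty_t; apply/good_tripleP => x y.
by case/orP: empty_t => [/orP [] | ] /eqP ->; rewrite ?inE // => _ _.
Qed.

Lemma T_split p : T p = #|~: full p| + #|proper p|.
Proof.
rewrite /T -(cardsID (full p) [set t : triple p | good_triple t]) addnC.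
congr (_ + _).
  apply: eq_card => t; rewrite in_setD in_setC.
  by case: (boolP (t \in full p)) => //= /good_nonfull; rewrite inE.
by apply: eq_card => t; rewrite !inE andbC.
Qed.

Lemma card_nonfull p : prime p -> #|~: full p| + (2 ^ p).-1 ^ 3 = (2 ^ p) ^ 3.
Proof.
move=> p_pr; have card_sets : #|{set 'F_p}| = 2 ^ p by rewrite card_setT card_Fp.
have -> : (2 ^ p) ^ 3 = #|{: triple p}|.
  by rewrite !card_prod card_sets !expnS expn0 muln1 mulnA.
rewrite -(cardsC (full p)) addnC !cardsX !cardsC1 card_sets.
by rewrite !expnS expn0 muln1 mulnA.
Qed.

(* The mirror symmetry (A,B,C) -> (C,-B,A): x + y = z iff z + (-y) = x. *)
Definition mirror p (t : triple p) : triple p :=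
  (t.2, [set (- y)%R | y in t.1.2], t.1.1).

Lemma mirror_inj p : injective (@mirror p).
Proof.
move=> [[A1 B1] C1] [[A2 B2] C2] [-> negB ->].
by rewrite (imset_inj (@oppr_inj _) negB).
Qed.

Lemma mirror_good p (t : triple p) : good_triple t -> good_triple (mirror t).
Proof.
move=> /good_tripleP G; apply/good_tripleP => z _ zC /imsetP [y yB ->].
by apply/negP => zyA; move: (G _ _ zyA yB); rewrite /= addrNK zC.
Qed.

Definition small p : {set {set 'F_p}} := [set A : {set 'F_p} | #|A| <= 1].

Lemma card_small p : prime p -> #|small p| <= p.+1.
Proof.
move=> p_pr; have -> : small p =
    [set A : {set 'F_p} | #|A| == 0] :|: [set A : {set 'F_p} | #|A| == 1].
  by apply/setP => A; rewrite !inE leq_eqVlt ltnS leqn0 orbC.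
apply: leq_trans (leq_card_setU _ _).1 _.
by rewrite !card_draws card_Fp // bin0 bin1 add1n.
Qed.

(* A proper triple is rich, or has a rich mirror, or has |A|, |C| <= 1. *)
Lemma proper_bound p : prime p ->
  #|proper p| <= 2 * #|rich p| + p.+1 ^ 2 * 2 ^ p.
Proof.
move=> p_pr.
have cover : proper p \subset
    rich p :|: @mirror p @^-1: rich p :|: setX (setX (small p) setT) (small p).
  apply/subsetP => -[[A B] C]; rewrite !inE /= => /andP [/andP [/andP [A0 B0] C0] G].
  rewrite G A0 B0 C0 mirror_good // imset_eq0 B0 /= andbT.
  by case: (ltnP 1 #|C|) => //=; case: (ltnP 1 #|A|).
apply: leq_trans (subset_leq_card cover) _.
rewrite mul2n -addnn (expnS _ 1) expn1 mulnAC.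
apply: leq_trans (leq_card_setU _ _).1 _; rewrite leq_add //.
  apply: leq_trans (leq_card_setU _ _).1 _.
  by rewrite card_preimset //; exact: mirror_inj.
rewrite !cardsX cardsT card_setT card_Fp //.
by apply: leq_mul; [apply: leq_mul|]; rewrite ?card_small.
Qed.

(* Polynomial factors are absorbed by a slightly larger base, through the
   binomial term 'C(n + 4, 4) a^n b^4 of (a + b)^(n + 4). *)
Lemma poly_exp_bound a b n : (n.+1 ^ 4 * a ^ n * b ^ 4 <= 24 * (a + b) ^ (n + 4))%N.
Proof.
rewrite !addnS addn0.
have binom : 'C(n.+4, 4) * (a ^ n * b ^ 4) <= (a + b) ^ n.+4.
  have lt4 : 4 < n.+4.+1 by rewrite !ltnS.
  rewrite expnDn (bigD1 (Ordinal lt4)) //= (_ : n.+4 - 4 = n) ?leq_addr //.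
  by rewrite -addn4 addnK.
have falling : n.+1 ^ 4 <= 24 * 'C(n.+4, 4).
  rewrite mulnC (_ : 24 = 4`!) // bin_ffact !ffactnS ffactn0 /= !expnS expn0.
  by rewrite !muln1; nia.
apply: (@leq_trans (24 * 'C(n.+4, 4) * (a ^ n * b ^ 4))).
  by rewrite -mulnA leq_mul2r falling orbT.
by rewrite -mulnA leq_mul2l binom orbT.
Qed.

Definition deviation p : nat := #|proper p| + 3 * 2 ^ p.

Lemma T_close p : prime p ->
  T p <= 3 * 4 ^ p + deviation p /\ 3 * 4 ^ p <= T p + deviation p.
Proof.
move=> p_pr; have := card_nonfull p_pr.
have -> : 4 ^ p = 2 ^ p * 2 ^ p by rewrite -expnMn.
rewrite /deviation T_split.
by move: (2 ^ p) #|~: full p| #|proper p| => [|y] e n /=; rewrite !expnS !expn0; nia.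
Qed.

Lemma deviation_poly_bound p : prime p -> 2 < p ->
  100 ^ p * deviation p <= 2004 * (p.+1 ^ 4 * 390 ^ p).
Proof.
move=> p_pr p_gt2.
have rich_le : 10 ^ p * #|rich p| <= 1000 * p ^ 4 * 39 ^ p.
  apply: (@leq_trans (10 ^ p * (p ^ 4 * size (walks p None)))).
    by rewrite leq_mul2l rich_bound ?orbT.
  by rewrite mulnCA (mulnC 1000) -mulnA leq_mul2l (walks_bound p None) orbT.
have small_pow : 10 ^ p * 2 ^ p <= 39 ^ p by rewrite -expnMn leq_exp2r // prime_gt0.
have E100 : 100 ^ p = 10 ^ p * 10 ^ p by rewrite -expnMn.
have E390 : 390 ^ p = 10 ^ p * 39 ^ p by rewrite -expnMn.
have p4_le : p ^ 4 <= p.+1 ^ 4 by rewrite leq_exp2r.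
have sq_le : p.+1 ^ 2 + 3 <= 4 * p.+1 ^ 4 by rewrite !expnS expn0; nia.
have := proper_bound p_pr; rewrite /deviation E100 E390.
move: rich_le small_pow p4_le sq_le.
move: (10 ^ p) (39 ^ p) (2 ^ p) (p ^ 4) (p.+1 ^ 4) (p.+1 ^ 2) => X Y Z Q P S.
move: #|rich p| #|proper p| => R N XR XZ QP SP NR.
have N_le : N + 3 * Z <= 2 * R + (S + 3) * Z by lia.
have XXR : X * (X * R) <= 1000 * (P * (X * Y)).
  apply: (@leq_trans (X * (1000 * Q * Y))); first by rewrite leq_mul2l XR orbT.
  by rewrite mulnA (mulnC X) -!mulnA; do 2!apply: leq_mul => //.
have XXZ : (S + 3) * (X * (X * Z)) <= 4 * (P * (X * Y)).
  apply: (@leq_trans ((S + 3) * (X * Y))); first by rewrite !leq_mul2l XZ !orbT.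
  by rewrite [X in _ <= X]mulnA leq_mul.
apply: (@leq_trans (X * X * (2 * R + (S + 3) * Z))); first by rewrite leq_mul2l N_le orbT.
nia.
Qed.

Definition Kdev : nat := 2004 * 24 * 399 ^ 4.

Lemma deviation_bound p : prime p -> 2 < p -> 100 ^ p * deviation p <= Kdev * 399 ^ p.
Proof.
move=> p_pr p_gt2; apply: leq_trans (deviation_poly_bound p_pr p_gt2) _.
have := poly_exp_bound 390 9 p; rewrite /Kdev expnD (_ : 390 + 9 = 399) //.
move: (p.+1 ^ 4 * 390 ^ p) (399 ^ p) (399 ^ 4) => a b c; nia.
Qed.

Open Scope R_scope.

Lemma INR_add (m n : nat) : INR (m + n)%N = INR m + INR n.
Proof. by rewrite -plusE plus_INR. Qed.

Lemma INR_mul (m n : nat) : INR (m * n)%N = INR m * INR n.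
Proof. by rewrite -multE mult_INR. Qed.

Lemma INR_expn (m n : nat) : INR (m ^ n)%N = INR m ^ n.
Proof. by elim: n => [|n IH]; rewrite ?expn0 // expnS INR_mul IH. Qed.

Lemma leR_nat (m n : nat) : (m <= n)%N -> INR m <= INR n.
Proof. by move/leP; apply: le_INR. Qed.

Lemma Rabs_nat_bound (a b d K p : nat) :
  (a <= b + d)%N -> (b <= a + d)%N -> (100 ^ p * d <= K * 399 ^ p)%N ->
  Rabs (INR a - INR b) <= INR K * (4 - 1 / 100) ^ p.
Proof.
move=> /leR_nat ab /leR_nat ba /leR_nat dK.
rewrite INR_add in ab; rewrite INR_add in ba; rewrite !INR_mul !INR_expn in dK.
have d_le : INR d <= INR K * (4 - 1 / 100) ^ p.
  have pos100 : 0 < 100 ^ p by apply: pow_lt; lra.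
  have scale : 100 ^ p * (INR K * (4 - 1 / 100) ^ p) = INR K * 399 ^ p.
    rewrite Rmult_comm Rmult_assoc -Rpow_mult_distr.
    by rewrite (_ : (4 - 1 / 100) * 100 = 399) //; lra.
  have I100 : INR 100 = 100 by rewrite INR_IZR_INZ.
  have I399 : INR 399 = 399 by rewrite INR_IZR_INZ.
  by apply: (Rmult_le_reg_l (100 ^ p)) => //; rewrite scale -I100 -I399.
by apply: Rabs_le; lra.
Qed.

Theorem theorem4 :
  exists (cstar K : R) (p0 : nat), 0 < cstar /\ 0 < K /\
    forall p : nat, prime p -> leq p0 p ->
      Rabs (INR (T p) - 3 * 4 ^ p) <= K * (4 - cstar) ^ p.
Proof.
exists (1 / 100), (INR Kdev), 3%N; split; first lra.
split; first by apply/lt_0_INR/ltP; rewrite /Kdev !muln_gt0.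
move=> p p_pr p_gt2; have [T_le T_ge] := T_close p_pr.
have := Rabs_nat_bound T_le T_ge (deviation_bound p_pr p_gt2).
have I3 : INR 3 = 3 by rewrite INR_IZR_INZ.
have I4 : INR 4 = 4 by rewrite INR_IZR_INZ.
by rewrite INR_mul INR_expn I3 I4.
Qed.
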